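(* Consider the problem of minimizing $f(x)$ over $x\in Q$ subject to $g(x)\le0$, where $f,g:Q\to\mathbb{R}$ are convex, and let $x_*$ be a solution. Let $\delta\ge0$, $\varepsilon>0$, suppose $\|\nabla_\delta g(x)\|_*\le M_g$ for all $x\in Q$, let $x^0=\arg\min_{x\in Q}d(x)$ and let $\Theta_0>0$ satisfy $V(x_*,x^0)\le\Theta_0^2$. Run the following Algorithm C: set $I=\emptyset$; for $N=0,1,2,\dots$: if $g(x^N)\le\varepsilon\|\nabla_\delta g(x^N)\|_*+\delta$ (productive step), put $h_N=\varepsilon/\|\nabla_\delta f(x^N)\|_*$, $x^{N+1}=\mathrm{Mirr}_{x^N}(h_N\nabla_\delta f(x^N))$ and add $N$ to $I$; otherwise (non-productive step), put $h_N=\varepsilon/\|\nabla_\delta g(x^N)\|_*$ and $x^{N+1}=\mathrm{Mirr}_{x^N}(h_N\nabla_\delta g(x^N))$. Stop as soon as the total number $N$ of performed iterations satisfies $N\ge 2\Theta_0^2/\varepsilon^2$. Assume that $\nabla_\delta f(x^k)\ne0$ at every productive step. Then, when the algorithm stops, $I\ne\emptyset$ and $$\min_{k\in I}v_f^\delta(x^k,x_* )\le\varepsilon,\qquad \max_{k\in I}g(x^k)\le M_g\varepsilon+\delta.$$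
   Context: $Q\subseteq\mathbb{R}^n$ is closed and convex; $\|\cdot\|$ is a norm on $\mathbb{R}^n$, $\|\cdot\|_*$ its dual norm. For a convex function $\varphi$ on $Q$ and $\delta\ge0$, a $\delta$-subgradient of $\varphi$ at $x\in Q$ is a vector $\nabla_\delta\varphi(x)$ with $\varphi(y)-\varphi(x)\ge\langle\nabla_\delta\varphi(x),y-x\rangle-\delta$ for all $y\in Q$; for each $x$ one such vector is fixed and used throughout. $v_f^\delta(x,y)=\big\langle\nabla_\delta f(x)/\|\nabla_\delta f(x)\|_*,\ x-y\big\rangle$ if $\nabla_\delta f(x)\ne0$ and $v_f^\delta(x,y)=0$ otherwise. $d:Q\to\mathbb{R}$ is differentiable and 1-strongly convex on $Q$ w.r.t. $\|\cdot\|$; $V(y,x)=d(y)-d(x)-\langle\nabla d(x),y-x\rangle$; $\mathrm{Mirr}_x(p)=\arg\min_{u\in Q}\{\langle p,u\rangle+V(u,x)\}$. *)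

From HB Require Import structures.
From mathcomp Require Import all_boot all_order all_algebra.
From mathcomp Require Import all_classical all_reals all_analysis.
Set Implicit Arguments. Unset Strict Implicit. Unset Printing Implicit Defensive.
Import Order.TTheory GRing.Theory Num.Theory.
Import numFieldNormedType.Exports.
Local Open Scope classical_set_scope.
Local Open Scope ring_scope.

Section Defs.
Variables (R : realType) (n : nat).
Notation vec := 'rV[R]_n.

Definition dotv (p x : vec) : R := \sum_(i < n) p ord0 i * x ord0 i.

Definition is_norm (nrm : vec -> R) : Prop :=
  [/\ forall x, nrm x = 0 -> x = 0,
      forall (a : R) x, nrm (a *: x) = `|a| * nrm x &
      forall x y, nrm (x + y) <= nrm x + nrm y].

Definition dualn (nrm : vec -> R) (p : vec) : R :=
  sup [set dotv p x | x in [set x | nrm x <= 1]].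

Definition convex_on (Q : set vec) (phi : vec -> R) : Prop :=
  forall x y (t : R), Q x -> Q y -> 0 <= t <= 1 ->
    phi (t *: x + (1 - t) *: y) <= t * phi x + (1 - t) * phi y.

Definition is_dsubgrad (Q : set vec) (phi : vec -> R) (delta : R) (x s : vec) :=
  forall y, Q y -> phi y - phi x >= dotv s (y - x) - delta.

Definition bregman (d : vec -> R) (y x : vec) : R :=
  d y - d x - 'd d x (y - x).

Definition strongly_convex_prox (Q : set vec) (nrm : vec -> R) (d : vec -> R) :=
  (forall x, Q x -> differentiable d x) /\
  (forall x y, Q x -> Q y -> d y >= d x + 'd d x (y - x) + (nrm (y - x))^+2 / 2).

Definition is_mirr (Q : set vec) (d : vec -> R) (x p y : vec) : Prop :=
  Q y /\ forall u, Q u -> dotv p y + bregman d y x <= dotv p u + bregman d u x.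

Definition vfd (nrm : vec -> R) (gf : vec -> vec) (x y : vec) : R :=
  if gf x == 0 then 0 else dotv ((dualn nrm (gf x))^-1 *: gf x) (x - y).

End Defs.

From HB Require Import structures.
From mathcomp Require Import all_boot all_order all_algebra.
From mathcomp Require Import all_classical all_reals all_analysis.
From mathcomp Require Import lra.
Import Order.TTheory GRing.Theory Num.Theory.
Import numFieldNormedType.Exports.
Local Open Scope classical_set_scope.
Local Open Scope ring_scope.

(* Let V_k = V(xstar, x^k) be the Bregman distance of the k-th iterate to the
   solution.  The key fact (mirr_step_descent) is that a normalized mirror step
   x -> Mirr_x((eps / ||s||_* ) s) decreases V(u, .) by more than eps^2 / 2
   whenever <s, x - u> > eps ||s||_*.  This holds at a productive step k with
   v_f^delta(x^k, xstar) > eps (vfd_gt), and at every non-productive step, since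
   a delta-subgradient of g separates x^k from {g <= 0} (dsubgrad_separates).
   So if no productive k had v_f^delta(x^k, xstar) <= eps, telescoping would
   give 0 <= V_N < V_0 - N eps^2 / 2 <= Theta0^2 - N eps^2 / 2 <= 0.  The bound
   on g at productive steps is immediate from ||grad_delta g||_* <= Mg. *)

Set Implicit Arguments. Unset Strict Implicit.

Section InnerProduct.
Variables (R : realType) (n : nat).
Implicit Types (p x y : 'rV[R]_n) (a : R).

Lemma dotvDr p x y : dotv p (x + y) = dotv p x + dotv p y.
Proof. by rewrite /dotv -big_split; apply: eq_bigr => i _; rewrite mxE mulrDr. Qed.

Lemma dotvZr p x a : dotv p (a *: x) = a * dotv p x.
Proof. by rewrite /dotv mulr_sumr; apply: eq_bigr => i _; rewrite mxE mulrCA. Qed.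

Lemma dotvZl p x a : dotv (a *: p) x = a * dotv p x.
Proof. by rewrite /dotv mulr_sumr; apply: eq_bigr => i _; rewrite mxE mulrA. Qed.

Lemma dotvBr p x y : dotv p (x - y) = dotv p x - dotv p y.
Proof. by rewrite dotvDr -scaleN1r dotvZr mulN1r. Qed.

Lemma dotv0r p : dotv p 0 = 0.
Proof. by rewrite -(scale0r 0) dotvZr mul0r. Qed.

Lemma coord_le_norm x i : `|x ord0 i| <= `|x|.
Proof.
have /mapP[j _ ->] : `|x ord0 i| \in [seq `|x y.1 y.2| | y : 'I_1 * 'I_n].
  by apply/mapP; exists (ord0, i) => //=; rewrite mem_enum.
by rewrite [leRHS]/Num.norm /= mx_normrE; apply/bigmax_geP; right; exists j.
Qed.

Lemma dotv_le_norm p x : dotv p x <= (\sum_i `|p ord0 i|) * `|x|.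
Proof.
rewrite /dotv mulr_suml; apply: ler_sum => i _.
by apply: le_trans (ler_norm _) _; rewrite normrM ler_wpM2l ?coord_le_norm.
Qed.

End InnerProduct.

(* An abstract norm [nrm] on R^n is equivalent to the sup norm; this makes the
   dual norm a finite supremum. *)
Section AbstractNorm.
Variables (R : realType) (n : nat) (nrm : 'rV[R]_n -> R).
Hypothesis hn : is_norm nrm.
Implicit Types (p x y : 'rV[R]_n).

Lemma nrm0 : nrm 0 = 0.
Proof. by case: hn => _ hZ _; rewrite -(scale0r (0 : 'rV[R]_n)) hZ normr0 mul0r. Qed.

Lemma nrmN x : nrm (- x) = nrm x.
Proof. by case: hn => _ hZ _; rewrite -scaleN1r hZ normrN normr1 mul1r. Qed.

Lemma nrm_ge0 x : 0 <= nrm x.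
Proof. by case: hn => _ _ hT; have := hT x (- x); rewrite subrr nrm0 nrmN; lra. Qed.

Lemma nrm_gt0 x : x != 0 -> 0 < nrm x.
Proof.
by case: hn => hdef _ _ x0; rewrite lt_def nrm_ge0 andbT; apply: contra x0 => /eqP/hdef->.
Qed.

Lemma nrm_lipschitz x y : `|nrm x - nrm y| <= nrm (x - y).
Proof.
case: hn => _ _ hT; have := hT (x - y) y; have := hT (y - x) x.
by rewrite !subrK -[y - x]opprB nrmN ler_norml; lra.
Qed.

(* Upper half of the norm equivalence: nrm x <= C |x| with C = sum_i nrm e_i. *)
Lemma nrm_le_norm : exists2 C, 0 <= C & forall x, nrm x <= C * `|x|.
Proof.
case: hn => _ hZ hT.
exists (\sum_i nrm (delta_mx (ord0 : 'I_1) i)) => [|x].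
  by apply: sumr_ge0 => i _; exact: nrm_ge0.
rewrite {1}(matrix_sum_delta x) big_ord1 mulr_suml.
have nrm_sum (F : 'I_n -> 'rV[R]_n) : nrm (\sum_i F i) <= \sum_i nrm (F i).
  elim/big_rec2: _ => [|i y1 y2 _ IH]; first by rewrite nrm0.
  exact: le_trans (hT _ _) (lerD (lexx _) IH).
apply: le_trans (nrm_sum _) _; apply: ler_sum => i _.
by rewrite hZ mulrC ler_wpM2l ?nrm_ge0 ?coord_le_norm.
Qed.

Lemma nrm_continuous : continuous nrm.
Proof.
have [C C0 hC] := nrm_le_norm.
move=> x; apply/(@cvgrPdist_lt _ _ _ (nbhs x) (nbhs_filter x)) => e e0.
have e1 : 0 < e / (C + 1) by rewrite divr_gt0 // ltr_wpDl.
apply/nbhs_ballP; exists (e / (C + 1)) => //= t; rewrite -ball_normE /ball_ /= => ht.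
apply: le_lt_trans (nrm_lipschitz _ _) (le_lt_trans (hC _) _).
apply: le_lt_trans (_ : C * (e / (C + 1)) < e); first by rewrite ler_wpM2l // ltW.
by rewrite mulrA ltr_pdivrMr ?ltr_wpDl // mulrC ltr_pM2l //; lra.
Qed.

(* Lower half of the norm equivalence: nrm attains a positive minimum c on the
   compact unit sphere of the sup norm, hence c |x| <= nrm x. *)
Lemma norm_le_nrm : exists2 c, 0 < c & forall x, c * `|x| <= nrm x.
Proof.
case: hn => _ hZ _.
pose S := [set x : 'rV[R]_n | `|x| = 1].
have S_normalize x : x != 0 -> S (`|x|^-1 *: x).
  move=> x0; rewrite /S /= normrZ normrV ?unitfE ?normr_eq0 // normr_id mulVf //.
  by rewrite normr_eq0.
have [[s0 Ss0]|S0] := pselect (S !=set0); last first.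
  exists 1 => // x; rewrite mul1r.
  have [->|x0] := eqVneq x 0; first by rewrite normr0 nrm_ge0.
  by exfalso; apply: S0; exists (`|x|^-1 *: x); exact: S_normalize.
have cS : compact S.
  apply: bounded_closed_compact.
    rewrite /= /bounded_near; near=> M => y Sy /=.
    by rewrite Sy; near: M; exact: nbhs_pinfty_ge.
  have -> : S = (fun x : 'rV[R]_n => `|x|) @^-1` [set 1] by [].
  by apply: preimage_closed; [move=> y _; exact: norm_continuous | exact: closed_eq].
have [m Sm m_min] :=
  compact_EVT_min (ex_intro _ s0 Ss0) cS (continuous_subspaceT nrm_continuous).
have m0 : m != 0.
  by apply: contra_eq_neq (set_mem Sm) => ->; rewrite normr0 eq_sym oner_neq0.
exists (nrm m) => [|x]; first exact: nrm_gt0.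
have [->|x0] := eqVneq x 0; first by rewrite normr0 mulr0 nrm_ge0.
have := m_min _ (mem_set (S_normalize x x0)).
rewrite hZ normrV ?unitfE ?normr_eq0 // normr_id ler_pdivlMl ?normr_gt0 //.
by rewrite mulrC.
Unshelve. all: by end_near.
Qed.

Lemma dualn_has_sup p : has_sup [set dotv p x | x in [set x | nrm x <= 1]].
Proof.
have [c c0 hc] := norm_le_nrm.
split; first by exists 0, 0; rewrite /= ?nrm0 ?dotv0r.
exists ((\sum_i `|p ord0 i|) / c) => _ [x /= hx <-].
apply: le_trans (dotv_le_norm p x) _; rewrite ler_pdivlMr // -mulrA ler_piMr //.
  by apply: sumr_ge0 => i _.
by rewrite mulrC; apply: le_trans (hc x) hx.
Qed.

Lemma dualn_ge0 p : 0 <= dualn nrm p.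
Proof.
apply: sup_upper_bound; first exact: dualn_has_sup.
by exists 0; rewrite /= ?nrm0 ?dotv0r.
Qed.

Lemma dotv_le_dualn p z : dotv p z <= dualn nrm p * nrm z.
Proof.
have [->|z0] := eqVneq z 0; first by rewrite dotv0r nrm0 mulr0.
have nz := nrm_gt0 z0.
suff : dotv p ((nrm z)^-1 *: z) <= dualn nrm p by rewrite dotvZr ler_pdivrMl // mulrC.
apply: sup_upper_bound; first exact: dualn_has_sup.
exists ((nrm z)^-1 *: z) => //=.
by case: hn => _ hZ _; rewrite hZ ger0_norm ?invr_ge0 ?nrm_ge0 // mulVf ?gt_eqF.
Qed.

End AbstractNorm.

Lemma differential_ge (R : realType) n (d : 'rV[R]_n -> R) (y w : 'rV[R]_n) (a : R) :
  differentiable d y ->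
  (forall t, 0 < t -> t < 1 -> a <= t^-1 * (d (t *: w + y) - d y)) ->
  a <= 'd d y w.
Proof.
move=> dy quot_ge.
have quot_cvg := cvg_dnbhs_at_right (diff_derivable (v := w) dy).
rewrite -deriveE //; apply: (cvgr_to_ge quot_cvg); near=> t.
apply: quot_ge; near: t; [exact: nbhs_right_gt | exact/nbhs_right_lt/ltr01].
Unshelve. all: by end_near.
Qed.

Section MirrorStep.
Variables (R : realType) (n : nat) (Q : set 'rV[R]_n) (nrm d : 'rV[R]_n -> R).
Hypotheses (cQ : convex_set Q) (hn : is_norm nrm) (hd : strongly_convex_prox Q nrm d).
Implicit Types (p s x y u : 'rV[R]_n).

Lemma bregman_ge_sqr x y : Q x -> Q y -> nrm (y - x) ^+ 2 / 2 <= bregman d y x.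
Proof.
by case: hd => _ sc Qx Qy; have := sc x y Qx Qy; rewrite /bregman; lra.
Qed.

Lemma bregman_three_point x y u :
  bregman d u x - bregman d u y - bregman d y x = 'd d y (u - y) - 'd d x (u - y).
Proof.
rewrite /bregman; generalize ('d d x) ('d d y) => Dx Dy.
have -> : Dx (u - x) = Dx (u - y) + Dx (y - x) by rewrite -linearD addrA subrK.
by move: (Dx (u - y)) (Dx (y - x)) (Dy (u - y)) => a b c; lra.
Qed.

Lemma mirr_optimality x p y u : is_mirr Q d x p y -> Q u ->
  dotv p (y - u) <= bregman d u x - bregman d u y - bregman d y x.
Proof.
move=> [Qy y_min] Qu; rewrite bregman_three_point.
set w := u - y.
suff : dotv p y - dotv p u + 'd d x w <= 'd d y w.
  by rewrite dotvBr; generalize ('d d x w) ('d d y w) => a b; lra.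
apply: differential_ge; first exact: hd.1.
move=> t t0 t1.
have Qz : Q (t *: w + y).
  have := @cQ u y (Itv01 (ltW t0) (ltW t1)) (mem_set Qu) (mem_set Qy).
  rewrite inE; congr Q.
  by rewrite /conv /= /unstable.onem /w scalerBr scalerBl scale1r addrCA [LHS]addrC.
have := y_min _ Qz; rewrite /bregman dotvDr dotvZr [dotv p w]dotvBr.
generalize ('d d x) => Dx.
have -> : Dx (t *: w + y - x) = t * Dx w + Dx (y - x) by rewrite -addrA linearD linearZ.
rewrite ler_pdivlMl //.
move: (dotv p u) (dotv p y) (Dx w) (Dx (y - x)) (d (t *: w + y)) (d y) (d x) => a b c e z dy dx.
lra.
Qed.

Lemma mirr_step_bound x p y u L : Q x -> Q u ->
  (forall z, dotv p z <= L * nrm z) -> is_mirr Q d x p y ->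
  dotv p (x - u) <= bregman d u x - bregman d u y + L ^+ 2 / 2.
Proof.
move=> Qx Qu pL hm.
have opt := mirr_optimality hm Qu.
have Vyx := bregman_ge_sqr Qx hm.1.
have pxy : dotv p (x - y) <= L * nrm (y - x) by rewrite -(nrmN hn) opprB.
have -> : dotv p (x - u) = dotv p (x - y) + dotv p (y - u).
  by rewrite -dotvDr addrA subrK.
have : L * nrm (y - x) <= L ^+ 2 / 2 + nrm (y - x) ^+ 2 / 2.
  by have := sqr_ge0 (L - nrm (y - x)); rewrite sqrrB mulr2n; lra.
move: opt Vyx pxy; move: (bregman d u x) (bregman d u y) (bregman d y x) => a b c.
move: (dotv p (x - y)) (dotv p (y - u)) (nrm (y - x)) => e f r.
lra.
Qed.

Lemma mirr_step_descent x s y u eps : Q x -> Q u -> 0 < eps ->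
  eps * dualn nrm s < dotv s (x - u) ->
  is_mirr Q d x ((eps / dualn nrm s) *: s) y ->
  bregman d u y + eps ^+ 2 / 2 < bregman d u x.
Proof.
move=> Qx Qu e0 sxu hm.
have ds : 0 < dualn nrm s.
  rewrite lt_def dualn_ge0 // andbT; apply: contraTneq sxu => ds0.
  by rewrite ds0 mulr0 -leNgt; have := dotv_le_dualn hn s (x - u); rewrite ds0 mul0r.
have step_size : eps / dualn nrm s * dualn nrm s = eps by rewrite mulfVK ?gt_eqF.
have pL z : dotv ((eps / dualn nrm s) *: s) z <= eps * nrm z.
  rewrite dotvZl -[X in _ <= X * _]step_size -mulrA.
  by apply: ler_wpM2l; [rewrite divr_ge0 ?ltW | exact: dotv_le_dualn].
have := mirr_step_bound Qx Qu pL hm; rewrite dotvZl.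
have : eps ^+ 2 < eps / dualn nrm s * dotv s (x - u).
  by rewrite expr2 -[X in X * _]step_size -mulrA ltr_pM2l ?divr_gt0 // mulrC.
move: (bregman d u x) (bregman d u y) (eps / dualn nrm s * dotv s (x - u)) => a b c.
lra.
Qed.

End MirrorStep.

Lemma vfd_gt (R : realType) n (nrm : 'rV[R]_n -> R) (gf : 'rV[R]_n -> 'rV[R]_n)
    (x u : 'rV[R]_n) (eps : R) :
  is_norm nrm -> 0 < eps -> gf x != 0 -> eps < vfd nrm gf x u ->
  eps * dualn nrm (gf x) < dotv (gf x) (x - u).
Proof.
move=> hn e0 s0; rewrite /vfd (negbTE s0) dotvZl.
have [D0|D0] := eqVneq (dualn nrm (gf x)) 0.
  by rewrite D0 invr0 mul0r => /(lt_trans e0); rewrite ltxx.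
by rewrite ltr_pdivlMl ?lt_def ?D0 ?(dualn_ge0 hn) // mulrC.
Qed.

Lemma dsubgrad_separates (R : realType) n (Q : set 'rV[R]_n) (g : 'rV[R]_n -> R)
    (delta a : R) (x s u : 'rV[R]_n) :
  is_dsubgrad Q g delta x s -> Q u -> g u <= 0 -> a + delta < g x ->
  a < dotv s (x - u).
Proof. by move=> hs Qu gu gx; have := hs u Qu; rewrite !dotvBr; lra. Qed.

Lemma telescope_descent (R : realFieldType) (V : nat -> R) (c : R) (N : nat) :
  (forall k, (k <= N)%N -> V k.+1 + c < V k) -> V N.+1 + N.+1%:R * c < V 0%N.
Proof.
elim: N => [|N IH] drop; first by rewrite mul1r; exact: drop.
have := drop N.+1 (leqnn _); have := IH (fun k hk => drop k (leqW hk)).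
rewrite -(addn1 N.+1) natrD mulrDl mul1r.
by move: (V N.+2) (V N.+1) (V 0%N) (N.+1%:R * c) => a b e f; lra.
Qed.

Unset Implicit Arguments.

Theorem theorem3 (R : realType) (n : nat) (Q : set 'rV[R]_n)
  (nrm : 'rV[R]_n -> R) (d f g : 'rV[R]_n -> R) (gf gg : 'rV[R]_n -> 'rV[R]_n)
  (delta eps Mg Theta0 : R) (xstar : 'rV[R]_n) (xs : nat -> 'rV[R]_n) (N : nat) :
  closed Q -> convex_set Q -> is_norm nrm ->
  strongly_convex_prox Q nrm d ->
  convex_on Q f -> convex_on Q g ->
  0 <= delta -> 0 < eps ->
  (forall x, Q x -> is_dsubgrad Q f delta x (gf x)) ->
  (forall x, Q x -> is_dsubgrad Q g delta x (gg x)) ->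
  (* xstar solves min f(x) s.t. x in Q, g(x) <= 0 *)
  Q xstar -> g xstar <= 0 -> (forall x, Q x -> g x <= 0 -> f xstar <= f x) ->
  (forall x, Q x -> dualn nrm (gg x) <= Mg) ->
  (* x^0 = argmin_{x in Q} d(x) *)
  Q (xs 0%N) -> (forall u, Q u -> d (xs 0%N) <= d u) ->
  0 < Theta0 -> bregman d xstar (xs 0%N) <= Theta0 ^+ 2 ->
  (* Algorithm C: productive step at iteration k iff
     g(x^k) <= eps * ||grad_delta g(x^k)||_* + delta *)
  let productive k := g (xs k) <= eps * dualn nrm (gg (xs k)) + delta in
  (forall k, (k < N)%N ->
     if productive k then
       is_mirr Q d (xs k) ((eps / dualn nrm (gf (xs k))) *: gf (xs k)) (xs k.+1)
     else
       is_mirr Q d (xs k) ((eps / dualn nrm (gg (xs k))) *: gg (xs k)) (xs k.+1)) ->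
  (* N = number of performed iterations when the algorithm stops:
     the least N with N >= 2 Theta0^2 / eps^2 *)
  2 * Theta0 ^+ 2 / eps ^+ 2 <= N%:R ->
  (forall m, (m < N)%N -> m%:R < 2 * Theta0 ^+ 2 / eps ^+ 2) ->
  (forall k, (k < N)%N -> productive k -> gf (xs k) != 0) ->
  (* I = [set k | k < N /\ productive k] *)
  (exists k, (k < N)%N /\ productive k) /\
  (exists k, [/\ (k < N)%N, productive k & vfd nrm gf (xs k) xstar <= eps]) /\
  (forall k, (k < N)%N -> productive k -> g (xs k) <= Mg * eps + delta).
Proof.
move=> _ cQ hn hd _ _ _ e0 _ hsg Qs gs _ hMg Q0 _ T0 V0 productive hstep hN _ hgf.
have Qxs : forall k, (k <= N)%N -> Q (xs k).
  by elim=> [//|k IH] hk; move: (hstep k hk); case: ifP => _ [].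
have g_bound k : (k < N)%N -> productive k -> g (xs k) <= Mg * eps + delta.
  move=> hk /le_trans; apply; rewrite lerD2r mulrC ler_pM2r //.
  exact/hMg/Qxs/ltnW.
suff good : exists k,
    [/\ (k < N)%N, productive k & vfd nrm gf (xs k) xstar <= eps].
  by have [k [hk hp _]] := good; split; [exists k | split].
(* Otherwise every step brings x^k closer to xstar by eps^2 / 2 in Bregman
   divergence, which is impossible for N >= 2 Theta0^2 / eps^2 steps. *)
apply/not_existsP => no_good.
have N0 : (0 < N)%N.
  rewrite lt0n; apply: contraTneq hN => ->; rewrite -ltNge.
  by rewrite !divr_gt0 ?mulr_gt0 ?exprn_gt0.
have descent k : (k <= N.-1)%N ->
    bregman d xstar (xs k.+1) + eps ^+ 2 / 2 < bregman d xstar (xs k).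
  rewrite -ltnS prednK // => kN; have Qk := Qxs k (ltnW kN).
  move: (hstep k kN); case: ifP => hp; apply: mirr_step_descent => //.
    apply: vfd_gt => //; first exact: hgf.
    by rewrite ltNge; apply/negP => hv; apply: (no_good k).
  by apply: dsubgrad_separates (hsg _ Qk) Qs gs _; rewrite ltNge; exact/negbT.
have := telescope_descent descent; rewrite prednK //.
have := bregman_ge_sqr hd (Qxs N (leqnn N)) Qs.
have : 0 <= nrm (xstar - xs N) ^+ 2 / 2 by rewrite divr_ge0 ?sqr_ge0.
rewrite ler_pdivrMr ?exprn_gt0 // in hN; move: V0 hN.
move: (nrm _ ^+ 2 / 2) (bregman d xstar (xs N)) (bregman d xstar (xs 0%N)).
move: (N%:R) (eps ^+ 2) (Theta0 ^+ 2) => m e t r VN V0.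
lra.
Qed.
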